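(* Let $\mathbf C$ be an admissible category of coframes and $L$ a topological $\mathbf C$-object. The map $\epsilon_L:L\to\mathbb P(\mathrm{pt}\,L)$, $\epsilon_L(\ell)=\ell^\bullet$, is a morphism in $\mathbf C^{\mathrm{top}}$ (from $L$ to $(\mathbb P(\mathrm{pt}\,L),\{\text{closed subsets of }\mathrm{pt}\,L\})$), and it is injective if and only if $L$ is spatial.
   Context: A category of coframes has coframes as objects and coframe morphisms (preserving arbitrary infima and finite suprema); it is admissible if every powerset is an object and there are classes of index sets $\mathcal I,\mathcal J$ with morphisms exactly the monotone maps preserving existing $I$-indexed infima ($I\in\mathcal I$) and $J$-indexed suprema ($J\in\mathcal J$). A topological $\mathbf C$-object is $(L,C(L))$ with $C(L)$ a sublattice of $L$ of complemented elements; $\mathbf C^{\mathrm{top}}$ has as morphisms the $\mathbf C$-morphisms mapping closed elements to closed elements. $\mathrm{pt}\,L$ is the set of join-prime elements of $L$ (elements $x\ne\bot$ with $x\le\ell_1\vee\ell_2\Rightarrow x\le\ell_1$ or $x\le\ell_2$), $\ell^\bullet=\{x\in\mathrm{pt}\,L:x\le\ell\}$, and the closed subsets of $\mathrm{pt}\,L$ are the sets $c^\bullet$ with $c$ an infimum of elements of $C(L)$. A coframe is spatial if every element is a supremum of join-prime elements. *)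

Section Order.
Context {T : Type} (le : T -> T -> Prop).

Definition is_lb (S : T -> Prop) (x : T) : Prop := forall y, S y -> le x y.
Definition is_ub (S : T -> Prop) (x : T) : Prop := forall y, S y -> le y x.
Definition is_inf (S : T -> Prop) (x : T) : Prop :=
  is_lb S x /\ forall z, is_lb S z -> le z x.
Definition is_sup (S : T -> Prop) (x : T) : Prop :=
  is_ub S x /\ forall z, is_ub S z -> le x z.

Definition pair2 (a b : T) : T -> Prop := fun y => y = a \/ y = b.
Definition empty_set : T -> Prop := fun _ => False.

Definition is_bot (x : T) : Prop := is_sup empty_set x.
Definition is_top (x : T) : Prop := is_inf empty_set x.

(* coframe: complete lattice in which binary joins distribute over
   arbitrary meets:  a \/ /\S = /\ { a \/ s | s in S } *)
Definition is_coframe : Prop :=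
  (forall x, le x x) /\
  (forall x y z, le x y -> le y z -> le x z) /\
  (forall x y, le x y -> le y x -> x = y) /\
  (forall S, exists m, is_inf S m) /\
  (forall S, exists j, is_sup S j) /\
  (forall (a m j : T) (S : T -> Prop), is_inf S m -> is_sup (pair2 a m) j ->
     is_inf (fun y => exists s, S s /\ is_sup (pair2 a s) y) j).

Definition complemented (c : T) : Prop :=
  exists d, (forall b, is_inf (pair2 c d) b -> is_bot b) /\
            (forall t, is_sup (pair2 c d) t -> is_top t).

Definition join_prime (x : T) : Prop :=
  (~ is_bot x) /\
  forall l1 l2 j, is_sup (pair2 l1 l2) j -> le x j -> le x l1 \/ le x l2.

Definition spatial : Prop :=
  forall l, is_sup (fun x => join_prime x /\ le x l) l.

Definition topological (CL : T -> Prop) : Prop :=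
  (forall c, CL c -> complemented c) /\
  (forall b, is_bot b -> CL b) /\
  (forall t, is_top t -> CL t) /\
  (forall a b m, CL a -> CL b -> is_inf (pair2 a b) m -> CL m) /\
  (forall a b j, CL a -> CL b -> is_sup (pair2 a b) j -> CL j).

End Order.

Definition image {T U : Type} (f : T -> U) (S : T -> Prop) : U -> Prop :=
  fun u => exists t, S t /\ f t = u.
Definition range {I U : Type} (g : I -> U) : U -> Prop :=
  fun u => exists i, g i = u.

Section Maps.
Context {T U : Type} (leT : T -> T -> Prop) (leU : U -> U -> Prop) (f : T -> U).

Definition monotone : Prop := forall x y, leT x y -> leU (f x) (f y).

Definition pres_inf_idx (I : Type) : Prop :=
  forall (g : I -> T) x, is_inf leT (range g) x ->
    is_inf leU (range (fun i => f (g i))) (f x).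
Definition pres_sup_idx (J : Type) : Prop :=
  forall (g : J -> T) x, is_sup leT (range g) x ->
    is_sup leU (range (fun i => f (g i))) (f x).

Definition coframe_morphism : Prop :=
  (forall S x, is_inf leT S x -> is_inf leU (image f S) (f x)) /\
  (forall b, is_bot leT b -> is_bot leU (f b)) /\
  (forall a b j, is_sup leT (pair2 a b) j -> is_sup leU (pair2 (f a) (f b)) (f j)).
End Maps.

Definition subset_le (X : Type) : (X -> Prop) -> (X -> Prop) -> Prop :=
  fun A B => forall x, A x -> B x.

Record AdmCat := {
  Obj : forall T : Type, (T -> T -> Prop) -> Prop;
  Obj_coframe : forall T (le : T -> T -> Prop), Obj T le -> is_coframe le;
  Obj_pow : forall X : Type, Obj (X -> Prop) (@subset_le X);
  Iset : Type -> Prop;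
  Jset : Type -> Prop;
  adm : forall T U (leT : T -> T -> Prop) (leU : U -> U -> Prop),
    Obj T leT -> Obj U leU -> forall f : T -> U,
      coframe_morphism leT leU f <->
      (monotone leT leU f /\
       (forall I, Iset I -> pres_inf_idx leT leU f I) /\
       (forall J, Jset J -> pres_sup_idx leT leU f J))
}.

Definition Chom (C : AdmCat) {T U} (leT : T -> T -> Prop) (leU : U -> U -> Prop)
  (f : T -> U) : Prop := coframe_morphism leT leU f.

Definition pt {T} (le : T -> T -> Prop) : Type := { x : T | join_prime le x }.

Definition bullet {T} (le : T -> T -> Prop) (l : T) : pt le -> Prop :=
  fun p => le (proj1_sig p) l.

Definition closed_pt {T} (le : T -> T -> Prop) (CL : T -> Prop)
  (A : pt le -> Prop) : Prop :=
  exists c, (exists S, (forall s, S s -> CL s) /\ is_inf le S c) /\ A = bullet le c.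

Definition Ctop_hom (C : AdmCat) {T U} (leT : T -> T -> Prop) (CLT : T -> Prop)
  (leU : U -> U -> Prop) (CLU : U -> Prop) (f : T -> U) : Prop :=
  Chom C leT leU f /\ (forall c, CLT c -> CLU (f c)).

(* Every subset of pt L is complemented, so the substantive part of
   "C(pt L) is a topology" is closure under binary unions: if [c1 = inf S1] and
   [c2 = inf S2], then [c1^• ∪ c2^•] is the [•] of [inf {s1 ∨ s2}], because a
   join-prime point lying below every [s1 ∨ s2] but not below some [s1 ∈ S1]
   must lie below every [s2 ∈ S2].  The map [ℓ ↦ ℓ^•] preserves infima in any
   poset, kills the bottom since points are not bottom, and preserves binary
   joins precisely because points are join-prime; only these coframe-morphism
   properties are needed, not the admissibility axioms of C.  Finally [ℓ^•]
   only remembers the points below [ℓ], so it is injective iff every [ℓ] is the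
   join of these points, i.e. iff [L] is spatial. *)

From Stdlib Require Import Classical FunctionalExtensionality PropExtensionality.

Lemma pred_ext {X : Type} (A B : X -> Prop) : (forall x, A x <-> B x) -> A = B.
Proof.
  intro H; apply functional_extensionality; intro x.
  apply propositional_extensionality, H.
Qed.

Section Powerset.
Context {X : Type}.

Lemma subset_inf2E (A B m : X -> Prop) :
  is_inf (@subset_le X) (pair2 A B) m -> m = (fun x => A x /\ B x).
Proof.
  intros [Hlb Hglb]; apply pred_ext; intro x; split.
  - intro hm; split.
    + exact (Hlb A (or_introl eq_refl) x hm).
    + exact (Hlb B (or_intror eq_refl) x hm).
  - intros [ha hb]; apply (Hglb (eq x)); [|reflexivity].
    intros y [-> | ->] z <-; assumption.
Qed.

Lemma subset_sup2E (A B j : X -> Prop) :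
  is_sup (@subset_le X) (pair2 A B) j -> j = (fun x => A x \/ B x).
Proof.
  intros [Hub Hlub]; apply pred_ext; intro x; split.
  - apply (Hlub (fun x => A x \/ B x)); intros y [-> | ->] z hz; auto.
  - intros [h | h].
    + exact (Hub A (or_introl eq_refl) x h).
    + exact (Hub B (or_intror eq_refl) x h).
Qed.

Lemma subset_botE (b : X -> Prop) : is_bot (@subset_le X) b -> b = empty_set.
Proof.
  intros [_ Hlub]; apply pred_ext; intro x; split; [|intros []].
  apply Hlub; intros y [].
Qed.

Lemma subset_topE (t : X -> Prop) : is_top (@subset_le X) t -> t = (fun _ => True).
Proof.
  intros [_ Hglb]; apply pred_ext; intro x; split; [constructor|].
  intros _; apply (Hglb (fun _ => True)); [intros y []|constructor].
Qed.

Lemma subset_complemented (A : X -> Prop) : complemented (@subset_le X) A.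
Proof.
  exists (fun x => ~ A x); split.
  - intros b Hb; rewrite (subset_inf2E _ _ _ Hb).
    split; [intros y []|]; intros z _ x [].
    contradiction.
  - intros t Ht; rewrite (subset_sup2E _ _ _ Ht).
    split; [intros y []|]; intros z _ x _.
    apply classic.
Qed.

End Powerset.

Section Points.
Context {T : Type} (le : T -> T -> Prop).
Hypothesis le_refl : forall x, le x x.
Hypothesis le_trans : forall x y z, le x y -> le y z -> le x z.

Lemma bot_le b z : is_bot le b -> le b z.
Proof. intros [_ Hlub]; apply Hlub; intros y []. Qed.

Lemma le_top t z : is_top le t -> le z t.
Proof. intros [_ Hglb]; apply Hglb; intros y []. Qed.

Lemma is_inf_singleton c : is_inf le (eq c) c.
Proof. split; [intros y <-; apply le_refl | intros z Hz; apply Hz; reflexivity]. Qed.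

Lemma join_prime_not_le_bot x b : join_prime le x -> is_bot le b -> ~ le x b.
Proof.
  intros [Hx _] Hb hxb; apply Hx; split; [intros y []|].
  intros z _; exact (le_trans _ _ _ hxb (bot_le b z Hb)).
Qed.

Lemma bullet_infE S c p :
  is_inf le S c -> bullet le c p <-> forall s, S s -> bullet le s p.
Proof.
  intros [Hlb Hglb]; unfold bullet; split.
  - intros hp s hs; exact (le_trans _ _ _ hp (Hlb s hs)).
  - apply Hglb.
Qed.

Lemma bullet_botE b p : is_bot le b -> ~ bullet le b p.
Proof. destruct p as [x jx]; exact (join_prime_not_le_bot x b jx). Qed.

Lemma bullet_sup2E a b j p :
  is_sup le (pair2 a b) j -> bullet le j p <-> bullet le a p \/ bullet le b p.
Proof.
  intros Hj; destruct p as [x jx]; unfold bullet; simpl; split.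
  - exact (proj2 jx a b j Hj).
  - intros [h | h]; apply (le_trans _ _ _ h), (proj1 Hj); [left | right]; reflexivity.
Qed.

Lemma coframe_morphism_bullet : coframe_morphism le (@subset_le (pt le)) (bullet le).
Proof.
  split; [|split].
  - intros S c Hc; split.
    + intros A [s [hs <-]] p hp; exact (proj1 (bullet_infE S c p Hc) hp s hs).
    + intros Z HZ p hp; apply (bullet_infE S c p Hc); intros s hs.
      exact (HZ _ (ex_intro _ s (conj hs eq_refl)) p hp).
  - intros b Hb; split; [intros y []|].
    intros Z _ p hp; destruct (bullet_botE b p Hb hp).
  - intros a b j Hj; split.
    + intros A [-> | ->] p hp; apply (bullet_sup2E a b j p Hj); auto.
    + intros Z HZ p hp; destruct (proj1 (bullet_sup2E a b j p Hj) hp) as [h | h].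
      * exact (HZ _ (or_introl eq_refl) p h).
      * exact (HZ _ (or_intror eq_refl) p h).
Qed.

Variable CL : T -> Prop.

Lemma closed_pt_bullet c : CL c -> closed_pt le CL (bullet le c).
Proof.
  intro hc; exists c; split; [|reflexivity].
  exists (eq c); split; [intros s <-; exact hc | apply is_inf_singleton].
Qed.

Hypothesis infs : forall S, exists m, is_inf le S m.

Lemma closed_pt_inter A B :
  closed_pt le CL A -> closed_pt le CL B -> closed_pt le CL (fun p => A p /\ B p).
Proof.
  intros [c1 [[S1 [HS1 Hc1]] ->]] [c2 [[S2 [HS2 Hc2]] ->]].
  destruct (infs (fun s => S1 s \/ S2 s)) as [c Hc].
  exists c; split.
  - exists (fun s => S1 s \/ S2 s); split; [intros s [h | h]; auto | exact Hc].
  - apply pred_ext; intro p.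
    rewrite (bullet_infE _ _ p Hc1), (bullet_infE _ _ p Hc2), (bullet_infE _ _ p Hc).
    firstorder.
Qed.

Hypothesis sups : forall S, exists j, is_sup le S j.
Hypothesis CL_join : forall a b j, CL a -> CL b -> is_sup le (pair2 a b) j -> CL j.

Lemma closed_pt_union A B :
  closed_pt le CL A -> closed_pt le CL B -> closed_pt le CL (fun p => A p \/ B p).
Proof.
  intros [c1 [[S1 [HS1 Hc1]] ->]] [c2 [[S2 [HS2 Hc2]] ->]].
  set (S := fun y => exists s1 s2, S1 s1 /\ S2 s2 /\ is_sup le (pair2 s1 s2) y).
  destruct (infs S) as [c Hc].
  exists c; split.
  - exists S; split; [|exact Hc].
    intros y (s1 & s2 & h1 & h2 & hj); exact (CL_join s1 s2 y (HS1 _ h1) (HS2 _ h2) hj).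
  - apply pred_ext; intro p.
    rewrite (bullet_infE _ _ p Hc1), (bullet_infE _ _ p Hc2), (bullet_infE _ _ p Hc).
    split.
    + intros h y (s1 & s2 & h1 & h2 & hj); apply (bullet_sup2E s1 s2 y p hj).
      destruct h; auto.
    + intro h; destruct (classic (forall s1, S1 s1 -> bullet le s1 p)) as [H1 | H1];
        [left; exact H1 | right].
      apply not_all_ex_not in H1 as [s1 H1]; apply imply_to_and in H1 as [hs1 hp1].
      intros s2 hs2; destruct (sups (pair2 s1 s2)) as [j hj].
      assert (hpj : bullet le j p) by (apply h; exists s1, s2; auto).
      destruct (proj1 (bullet_sup2E s1 s2 j p hj) hpj); [contradiction | assumption].
Qed.

Lemma topological_closed_pt :
  topological le CL -> topological (@subset_le (pt le)) (closed_pt le CL).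
Proof.
  intros (_ & CL_bot & CL_top & _ & _).
  split; [|split; [|split; [|split]]].
  - intros A _; apply subset_complemented.
  - intros b Hb; rewrite (subset_botE b Hb).
    destruct (sups empty_set) as [bo Hbo].
    replace empty_set with (bullet le bo).
    + exact (closed_pt_bullet bo (CL_bot bo Hbo)).
    + apply pred_ext; intro p; split; [apply (bullet_botE bo p Hbo) | intros []].
  - intros t Ht; rewrite (subset_topE t Ht).
    destruct (infs empty_set) as [tp Htp].
    replace (fun _ => True) with (bullet le tp).
    + exact (closed_pt_bullet tp (CL_top tp Htp)).
    + apply pred_ext; intro p; split; [constructor | intros _; exact (le_top tp _ Htp)].
  - intros A B m HA HB Hm; rewrite (subset_inf2E A B m Hm).
    exact (closed_pt_inter A B HA HB).
  - intros A B j HA HB Hj; rewrite (subset_sup2E A B j Hj).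
    exact (closed_pt_union A B HA HB).
Qed.

Hypothesis le_anti : forall x y, le x y -> le y x -> x = y.

Lemma is_sup_unique S x y : is_sup le S x -> is_sup le S y -> x = y.
Proof.
  intros [Hx Hlx] [Hy Hly]; apply le_anti; [apply Hlx, Hy | apply Hly, Hx].
Qed.

Lemma bullet_injective_iff_spatial :
  (forall l m : T, bullet le l = bullet le m -> l = m) <-> spatial le.
Proof.
  split.
  - intros Hinj l; destruct (sups (fun x => join_prime le x /\ le x l)) as [j Hj].
    replace j with l in Hj; [exact Hj|].
    symmetry; apply Hinj, pred_ext; intros [x jx]; unfold bullet; simpl; split; intro h.
    + apply (le_trans _ _ _ h), (proj2 Hj); intros y [_ hy]; exact hy.
    + exact (proj1 Hj x (conj jx h)).
  - intros Hsp l m E; apply (is_sup_unique _ _ _ (Hsp l)).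
    replace (fun x => join_prime le x /\ le x l)
      with (fun x => join_prime le x /\ le x m); [exact (Hsp m)|].
    apply pred_ext; intro x; split; intros [jx hx]; split; try exact jx;
      pose proof (equal_f E (exist _ x jx)) as Ex; unfold bullet in Ex; simpl in Ex;
      [rewrite Ex | rewrite <- Ex]; exact hx.
Qed.

End Points.

Theorem mainTheorem16 (C : AdmCat) (T : Type) (le : T -> T -> Prop)
  (CL : T -> Prop) :
  Obj C T le -> topological le CL ->
  (topological (@subset_le (pt le)) (closed_pt le CL) /\
   Ctop_hom C le CL (@subset_le (pt le)) (closed_pt le CL) (bullet le)) /\
  ((forall l m : T, bullet le l = bullet le m -> l = m) <-> spatial le).
Proof.
  intros HO Htop.
  destruct (Obj_coframe C T le HO) as (le_refl & le_trans & le_anti & infs & sups & _).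
  pose proof Htop as (_ & _ & _ & _ & CL_join).
  split; [split|].
  - exact (topological_closed_pt le le_refl le_trans CL infs sups CL_join Htop).
  - split.
    + exact (coframe_morphism_bullet le le_trans).
    + exact (closed_pt_bullet le le_refl CL).
  - exact (bullet_injective_iff_spatial le le_trans sups le_anti).
Qed.
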